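(* Let $n\ge2$. Let $a,b>0$ and let $f:[-a,b]\to[0,\infty)$ be continuous, strictly positive on $(-a,b)$, such that $h:=f^{1/(n-1)}$ is concave on $[-a,b]$ and $\int_{-a}^b t f(t)\,dt=0$. Then $$\frac{\int_0^b f(t)\,dt}{\int_{-a}^0 f(t)\,dt}\le\Big(1+\frac1n\Big)^n-1,$$ with equality if and only if $h$ is affine on $[-a,b]$ and $h(-a)=0$. *)

From Stdlib Require Import Reals.
Open Scope R_scope.

Definition continuous_on_interval (f : R -> R) (lo hi : R) : Prop :=
  forall x, lo <= x <= hi ->
    forall eps, 0 < eps -> exists delta, 0 < delta /\
      forall y, lo <= y <= hi -> Rabs (y - x) < delta -> Rabs (f y - f x) < eps.

Definition nonneg_root (k : nat) (x : R) : R :=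
  if Rle_dec x 0 then 0 else Rpower x (/ INR k).

Definition concave_on (h : R -> R) (lo hi : R) : Prop :=
  forall x y l, lo <= x <= hi -> lo <= y <= hi -> 0 <= l <= 1 ->
    l * h x + (1 - l) * h y <= h (l * x + (1 - l) * y).

Definition affine_on (h : R -> R) (lo hi : R) : Prop :=
  exists c d, forall t, lo <= t <= hi -> h t = c * t + d.

From Stdlib Require Import Reals Lra Lia Classical.
From Coquelicot Require Import Coquelicot.
Open Scope R_scope.

(* Let m = n - 1 >= 1 and let f >= 0 on [-a, b] have barycentre 0 and a
   concave profile h = f^(1/m).  We compare f with the affine profile
   ell(t) = h(0) + s t, where s is chosen so that ell^m, cut off at the zero
   -h(0)/s of ell, carries the same mass N as f on [-a, 0].
   - Negative side: concavity gives s a <= h(0) and lets h - ell change sign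
     only once on [-a, 0], so the mass of f there lies to the right of that of
     the cut-off profile: its moment is at least -h(0)^(n+1) / (n(n+1) s^2).
   - Positive side: concavity gives h <= ell on [0, b]; the mass P of f equals
     the mass of ell^m on some [0, beta], and f's moment is at least the
     moment of ell^m there.
   - The barycentre condition links the two moments, which yields
     n ell(beta) <= (n+1) h(0), while P / N = (ell(beta) / h(0))^n - 1.
   In the extremal case every comparison is tight, forcing f = ell^m and
   ell(-a) = 0; conversely such an f attains the bound. *)


Lemma pow_lt_compat_nonneg (x y : R) (k : nat) :
  (1 <= k)%nat -> 0 <= x < y -> x ^ k < y ^ k.
Proof.
  intros Hk [Hx Hxy]; induction k as [|k IH]; [lia|].
  destruct k as [|k]; [simpl; lra|].
  assert (IH' : x ^ S k < y ^ S k) by (apply IH; lia).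
  change (x * x ^ S k < y * y ^ S k).
  assert (0 <= x ^ S k) by (apply pow_le; lra).
  apply Rle_lt_trans with (y * x ^ S k); [apply Rmult_le_compat_r; lra|].
  apply Rmult_lt_compat_l; lra.
Qed.

Lemma pow_inj_nonneg (x y : R) (k : nat) :
  (1 <= k)%nat -> 0 <= x -> 0 <= y -> x ^ k = y ^ k -> x = y.
Proof.
  intros Hk Hx Hy E; destruct (Rtotal_order x y) as [H|[H|H]]; auto.
  - pose proof (pow_lt_compat_nonneg x y k Hk (conj Hx H)); lra.
  - pose proof (pow_lt_compat_nonneg y x k Hk (conj Hy H)); lra.
Qed.

Lemma nonneg_root_nonneg (k : nat) (x : R) : 0 <= nonneg_root k x.
Proof.
  unfold nonneg_root; destruct (Rle_dec x 0); [lra|].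
  left; apply exp_pos.
Qed.

Lemma nonneg_root_pos (k : nat) (x : R) : 0 < x -> 0 < nonneg_root k x.
Proof.
  intros Hx; unfold nonneg_root; destruct (Rle_dec x 0); [lra|].
  apply exp_pos.
Qed.

Lemma nonneg_root_pow (k : nat) (x : R) :
  (1 <= k)%nat -> 0 <= x -> nonneg_root k x ^ k = x.
Proof.
  intros Hk Hx; unfold nonneg_root; destruct (Rle_dec x 0).
  - assert (x = 0) by lra; subst; apply pow_i; lia.
  - assert (0 < INR k) by (apply lt_0_INR; lia).
    rewrite <- Rpower_pow by apply exp_pos.
    rewrite Rpower_mult, Rinv_l by lra.
    apply Rpower_1; lra.
Qed.

Lemma nonneg_root_of_pow (k : nat) (y : R) :
  (1 <= k)%nat -> 0 <= y -> nonneg_root k (y ^ k) = y.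
Proof.
  intros Hk Hy; apply (pow_inj_nonneg _ _ k Hk); [apply nonneg_root_nonneg|exact Hy|].
  apply nonneg_root_pow; [exact Hk|apply pow_le; exact Hy].
Qed.

Lemma concave_above_chord (h : R -> R) (lo hi u t v : R) :
  concave_on h lo hi -> lo <= u -> u < v -> v <= hi -> u <= t <= v ->
  (v - t) * h u + (t - u) * h v <= (v - u) * h t.
Proof.
  intros Hconc Hlo Huv Hhi Ht.
  set (l := (v - t) / (v - u)).
  assert (Hlv : l * (v - u) = v - t) by (unfold l; field; lra).
  assert (Hl : 0 <= l <= 1) by (split; nra).
  assert (Hpt : l * u + (1 - l) * v = t) by (unfold l; field; lra).
  pose proof (Hconc u v l ltac:(lra) ltac:(lra) Hl) as Hc.
  rewrite Hpt in Hc.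
  replace ((v - t) * h u + (t - u) * h v) with ((v - u) * (l * h u + (1 - l) * h v))
    by (unfold l; field; lra).
  apply Rmult_le_compat_l; lra.
Qed.

Lemma sign_change_point (k : R -> R) (lo hi : R) :
  lo <= hi -> 0 <= k hi ->
  (forall u t, lo <= u -> u <= t -> t <= hi -> 0 <= k u -> 0 <= k t) ->
  exists c, lo <= c <= hi /\ (forall t, lo <= t < c -> k t < 0) /\
            (forall t, c < t <= hi -> 0 <= k t).
Proof.
  intros Hlohi Hhi Hclosed.
  (* c is the infimum of the nonnegativity set, i.e. minus the supremum of
     its reflection E. *)
  set (E := fun x => exists u, lo <= u <= hi /\ 0 <= k u /\ x = - u).
  assert (HEbound : bound E) by (exists (- lo); intros x [u [Hu [_ ->]]]; lra).
  assert (HEhi : E (- hi)) by (exists hi; repeat split; lra).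
  destruct (completeness E HEbound (ex_intro _ _ HEhi)) as [sup [Hub Hleast]].
  assert (- hi <= sup) by (apply Hub; exact HEhi).
  assert (sup <= - lo) by (apply Hleast; intros x [u [Hu [_ ->]]]; lra).
  exists (- sup); repeat split; try lra.
  - intros t Ht; apply Rnot_le_lt; intros Hkt.
    assert (- t <= sup) by (apply Hub; exists t; repeat split; lra).
    lra.
  - intros t Ht.
    destruct (classic (exists u, lo <= u < t /\ 0 <= k u)) as [[u [Hu Hku]]|Hnone].
    + apply (Hclosed u t); lra.
    + assert (sup <= - t); [|lra].
      apply Hleast; intros x [u [Hu [Hku ->]]].
      destruct (Rle_dec t u); [lra|].
      exfalso; apply Hnone; exists u; split; [lra|exact Hku].
Qed.

Lemma continuous_on_interval_sub (g : R -> R) (lo hi x y : R) :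
  continuous_on_interval g lo hi -> lo <= x -> y <= hi ->
  continuous_on_interval g x y.
Proof.
  intros Hg Hx Hy t Ht e He.
  destruct (Hg t ltac:(lra) e He) as [d [Hd Hclose]].
  exists d; split; [exact Hd|].
  intros z Hz; apply Hclose; lra.
Qed.

Lemma continuous_on_interval_of_continuous (g : R -> R) (x y : R) :
  (forall t, continuous g t) -> continuous_on_interval g x y.
Proof.
  intros Hg t _ e He.
  destruct (proj2 (continuity_pt_filterlim g t) (Hg t) e He) as [d [Hd Hclose]].
  exists d; split; [exact Hd|].
  intros z _ Hzt; destruct (Req_dec z t) as [->|Hne].
  - rewrite Rminus_eq_0, Rabs_R0; exact He.
  - apply (Hclose z); repeat split; auto.
Qed.

Lemma continuous_on_interval_minus (g k : R -> R) (x y : R) :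
  continuous_on_interval g x y -> continuous_on_interval k x y ->
  continuous_on_interval (fun t => g t - k t) x y.
Proof.
  intros Hg Hk t Ht e He.
  destruct (Hg t Ht (e / 2) ltac:(lra)) as [d1 [Hd1 H1]].
  destruct (Hk t Ht (e / 2) ltac:(lra)) as [d2 [Hd2 H2]].
  exists (Rmin d1 d2); split; [apply Rmin_pos; assumption|].
  intros z Hz Hzt.
  specialize (H1 z Hz ltac:(pose proof (Rmin_l d1 d2); lra)).
  specialize (H2 z Hz ltac:(pose proof (Rmin_r d1 d2); lra)).
  revert H1 H2; unfold Rabs; repeat destruct Rcase_abs; lra.
Qed.

Lemma continuous_on_interval_opp (g : R -> R) (x y : R) :
  continuous_on_interval g x y -> continuous_on_interval (fun t => - g t) x y.
Proof.
  intros Hg t Ht e He; destruct (Hg t Ht e He) as [d [Hd Hclose]].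
  exists d; split; [exact Hd|].
  intros z Hz Hzt; replace (- g z - - g t) with (- (g z - g t)) by ring.
  rewrite Rabs_Ropp; apply Hclose; assumption.
Qed.

Lemma approx_interior_point (x y c t d : R) :
  x < y -> x <= t <= y -> 0 < d ->
  exists t', x < t' < y /\ t' <> c /\ Rabs (t' - t) < d.
Proof.
  intros Hxy Ht Hd.
  set (e := Rmin d ((y - x) / 2)).
  assert (0 < e) by (apply Rmin_pos; lra).
  assert (e <= d) by apply Rmin_l.
  assert (e <= (y - x) / 2) by apply Rmin_r.
  (* step inwards by e/2, or by e/4 if that lands on c *)
  set (sgn := if Rlt_dec t ((x + y) / 2) then 1 else -1).
  assert (Hsgn : sgn = 1 /\ t < (x + y) / 2 \/ sgn = -1 /\ (x + y) / 2 <= t)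
    by (unfold sgn; destruct Rlt_dec; [left|right]; split; lra).
  destruct (Req_dec (t + sgn * (e / 2)) c) as [Hc|Hc];
    [exists (t + sgn * (e / 4))|exists (t + sgn * (e / 2))];
    (repeat split; [| | |apply Rabs_def1]);
    destruct Hsgn as [[-> ?]|[-> ?]]; lra.
Qed.

Lemma continuous_on_interval_vanish (g : R -> R) (x y c : R) :
  x < y -> continuous_on_interval g x y ->
  (forall t, x < t < y -> t <> c -> g t = 0) ->
  forall t, x <= t <= y -> g t = 0.
Proof.
  intros Hxy Hg Hzero t Ht; apply NNPP; intros Hne.
  assert (Hgt : 0 < Rabs (g t)) by (apply Rabs_pos_lt; exact Hne).
  destruct (Hg t Ht _ Hgt) as [d [Hd Hclose]].
  destruct (approx_interior_point x y c t d Hxy Ht Hd) as [t' [Ht' [Hc Hdist]]].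
  specialize (Hclose t' ltac:(lra) Hdist).
  rewrite (Hzero t' Ht' Hc), Rminus_0_l, Rabs_Ropp in Hclose; lra.
Qed.

Lemma continuous_on_interval_locally_pos (g : R -> R) (x y t0 : R) :
  continuous_on_interval g x y -> x <= t0 <= y -> 0 < g t0 ->
  exists d, 0 < d /\ forall t, x <= t <= y -> Rabs (t - t0) < d -> g t0 / 2 < g t.
Proof.
  intros Hg Ht0 Hpos.
  destruct (Hg t0 Ht0 (g t0 / 2) ltac:(lra)) as [d [Hd Hclose]].
  exists d; split; [exact Hd|].
  intros t Ht Hdist; specialize (Hclose t Ht Hdist).
  revert Hclose; unfold Rabs; destruct Rcase_abs; lra.
Qed.

Lemma ex_RInt_sub_interval (g : R -> R) (lo hi x y : R) :
  lo <= x -> x <= y -> y <= hi -> ex_RInt g lo hi -> ex_RInt g x y.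
Proof.
  intros Hlo Hxy Hhi Hg.
  apply (ex_RInt_Chasles_2 g lo x y); [lra|].
  apply (ex_RInt_Chasles_1 g lo y hi); [lra|exact Hg].
Qed.

(* Extensionality, Chasles' relation and the integral of 0, stated for
   real-valued functions so that the equalities live in R. *)
Lemma RInt_ext_R (F G : R -> R) (x y : R) :
  (forall t, F t = G t) -> RInt F x y = RInt G x y.
Proof. intros Heq; apply RInt_ext; intros t _; apply Heq. Qed.

Lemma ex_RInt_ext_R (F G : R -> R) (x y : R) :
  (forall t, F t = G t) -> ex_RInt F x y -> ex_RInt G x y.
Proof. intros Heq; apply ex_RInt_ext; intros t _; apply Heq. Qed.

Lemma RInt_ext_closed (F G : R -> R) (x y : R) :
  x <= y -> (forall t, x <= t <= y -> F t = G t) -> RInt F x y = RInt G x y.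
Proof.
  intros Hxy Heq; apply RInt_ext.
  rewrite Rmin_left, Rmax_right by exact Hxy.
  intros t Ht; apply Heq; lra.
Qed.

Lemma RInt_Chasles_R (F : R -> R) (x y z : R) :
  ex_RInt F x y -> ex_RInt F y z -> RInt F x y + RInt F y z = RInt F x z.
Proof. intros H1 H2; exact (RInt_Chasles F x y z H1 H2). Qed.

Lemma RInt_zero_fun (x y : R) : RInt (fun _ => 0) x y = 0.
Proof. rewrite RInt_const; apply Rmult_0_r. Qed.

Lemma product_locally_bounded_below (F G : R -> R) (x y t0 : R) :
  x < y -> continuous_on_interval F x y -> continuous_on_interval G x y ->
  x <= t0 <= y -> 0 < F t0 -> 0 < G t0 ->
  exists p q e, x <= p /\ p < q /\ q <= y /\ 0 < e /\
    forall t, p <= t <= q -> e <= F t * G t.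
Proof.
  intros Hxy HF HG Ht0 HF0 HG0.
  destruct (continuous_on_interval_locally_pos F x y t0 HF Ht0 HF0) as [d1 [Hd1 HF1]].
  destruct (continuous_on_interval_locally_pos G x y t0 HG Ht0 HG0) as [d2 [Hd2 HG1]].
  set (d := Rmin d1 d2).
  assert (0 < d) by (apply Rmin_pos; assumption).
  assert (d <= d1) by apply Rmin_l.
  assert (d <= d2) by apply Rmin_r.
  exists (Rmax x (t0 - d / 2)), (Rmin y (t0 + d / 2)), (F t0 / 2 * (G t0 / 2)).
  assert (x <= Rmax x (t0 - d / 2) /\ t0 - d / 2 <= Rmax x (t0 - d / 2)
          /\ Rmax x (t0 - d / 2) <= t0)
    by (repeat split; [apply Rmax_l|apply Rmax_r|apply Rmax_lub; lra]).
  assert (Rmin y (t0 + d / 2) <= y /\ Rmin y (t0 + d / 2) <= t0 + d / 2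
          /\ t0 <= Rmin y (t0 + d / 2))
    by (repeat split; [apply Rmin_l|apply Rmin_r|apply Rmin_glb; lra]).
  repeat split; try lra.
  - unfold Rmax, Rmin; destruct Rle_dec; destruct Rle_dec; lra.
  - apply Rmult_lt_0_compat; lra.
  - intros t Ht.
    assert (Rabs (t - t0) < d1) by (apply Rabs_def1; lra).
    assert (Rabs (t - t0) < d2) by (apply Rabs_def1; lra).
    specialize (HF1 t ltac:(lra) ltac:(assumption)).
    specialize (HG1 t ltac:(lra) ltac:(assumption)).
    apply Rmult_le_compat; lra.
Qed.

Lemma RInt_product_pos (F G : R -> R) (x y t0 : R) :
  x < y -> ex_RInt (fun t => F t * G t) x y ->
  (forall t, x < t < y -> 0 <= F t * G t) ->
  continuous_on_interval F x y -> continuous_on_interval G x y ->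
  x <= t0 <= y -> 0 < F t0 -> 0 < G t0 ->
  0 < RInt (fun t => F t * G t) x y.
Proof.
  intros Hxy Hex Hnonneg HF HG Ht0 HF0 HG0.
  destruct (product_locally_bounded_below F G x y t0 Hxy HF HG Ht0 HF0 HG0)
    as [p [q [e [Hp [Hpq [Hq [He Hbound]]]]]]].
  assert (Hex' : forall u v, x <= u -> u <= v -> v <= y ->
            ex_RInt (fun t => F t * G t) u v)
    by (intros u v ? ? ?; apply (ex_RInt_sub_interval _ x y); assumption).
  assert (Hmid : (q - p) * e <= RInt (fun t => F t * G t) p q).
  { replace ((q - p) * e) with (RInt (fun _ => e) p q)
      by (rewrite RInt_const; reflexivity).
    apply RInt_le; [lra|apply ex_RInt_const|apply Hex'; lra|].
    intros t Ht; apply Hbound; lra. }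
  assert (0 <= RInt (fun t => F t * G t) x p)
    by (apply RInt_ge_0; [lra|apply Hex'; lra|intros; apply Hnonneg; lra]).
  assert (0 <= RInt (fun t => F t * G t) q y)
    by (apply RInt_ge_0; [lra|apply Hex'; lra|intros; apply Hnonneg; lra]).
  assert (0 < (q - p) * e) by (apply Rmult_lt_0_compat; lra).
  rewrite <- (RInt_Chasles_R _ x p y), <- (RInt_Chasles_R _ p q y)
    by (apply Hex'; lra).
  lra.
Qed.

Lemma RInt_pos_of_pos_point (G : R -> R) (x y t0 : R) :
  x < y -> ex_RInt G x y -> (forall t, x < t < y -> 0 <= G t) ->
  continuous_on_interval G x y -> x <= t0 <= y -> 0 < G t0 ->
  0 < RInt G x y.
Proof.
  intros Hxy Hex Hnonneg HG Ht0 HG0.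
  rewrite (RInt_ext_R G (fun t => 1 * G t)) by (intros; ring).
  apply (RInt_product_pos (fun _ => 1) G x y t0); try assumption; try lra.
  - apply (ex_RInt_ext_R G); [intros; ring|exact Hex].
  - intros t Ht; rewrite Rmult_1_l; apply Hnonneg; exact Ht.
  - apply continuous_on_interval_of_continuous; intros; apply continuous_const.
Qed.

Lemma RInt_weighted_zero (G : R -> R) (x y c : R) :
  x < y -> continuous_on_interval G x y ->
  ex_RInt (fun t => (t - c) * G t) x y ->
  (forall t, x < t < y -> 0 <= (t - c) * G t) ->
  RInt (fun t => (t - c) * G t) x y = 0 ->
  forall t, x <= t <= y -> G t = 0.
Proof.
  intros Hxy HG Hex Hnonneg Hzero.
  apply (continuous_on_interval_vanish G x y c Hxy HG).
  intros t Ht Htc; apply NNPP; intros HGt.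
  assert (Hw := Hnonneg t Ht).
  destruct (Rlt_dec c t) as [Hct|Hct].
  -
    assert (0 < G t) by (destruct (Rtotal_order (G t) 0) as [|[|]]; nra).
    enough (0 < RInt (fun t => (t - c) * G t) x y) by lra.
    apply (RInt_product_pos (fun t => t - c) G x y t); try assumption; try lra.
    apply continuous_on_interval_of_continuous; intros u.
    apply (ex_derive_continuous (fun t => t - c)); auto_derive; exact I.
  - (* G is negative at t: use the weight c - t against - G *)
    assert (G t < 0) by (destruct (Rtotal_order (G t) 0) as [|[|]]; nra).
    enough (0 < RInt (fun t => (c - t) * - G t) x y)
      by (rewrite (RInt_ext_R _ (fun t => (t - c) * G t)) in * by (intros; ring); lra).
    apply (RInt_product_pos (fun t => c - t) (fun t => - G t) x y t); try lra.
    + apply (ex_RInt_ext_R (fun t => (t - c) * G t)); [intros; ring|exact Hex].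
    + intros u Hu; replace ((c - u) * - G u) with ((u - c) * G u) by ring.
      apply Hnonneg; exact Hu.
    + apply continuous_on_interval_of_continuous; intros u.
      apply (ex_derive_continuous (fun t => c - t)); auto_derive; exact I.
    + apply continuous_on_interval_opp; exact HG.
Qed.

Lemma RInt_shifted_moment (F G : R -> R) (x y c : R) :
  ex_RInt F x y -> ex_RInt G x y ->
  ex_RInt (fun t => t * F t) x y -> ex_RInt (fun t => t * G t) x y ->
  ex_RInt (fun t => (t - c) * (F t - G t)) x y /\
  RInt (fun t => (t - c) * (F t - G t)) x y =
    (RInt (fun t => t * F t) x y - RInt (fun t => t * G t) x y)
    - c * (RInt F x y - RInt G x y).
Proof.
  intros HF HG HtF HtG.
  assert (Hmom : ex_RInt (fun t => t * F t - t * G t) x y)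
    by exact (ex_RInt_minus _ _ x y HtF HtG).
  assert (Hmass : ex_RInt (fun t => F t - G t) x y)
    by exact (ex_RInt_minus _ _ x y HF HG).
  assert (Hcmass : ex_RInt (fun t => c * (F t - G t)) x y)
    by exact (ex_RInt_scal _ x y c Hmass).
  assert (Hsplit : forall t, (t - c) * (F t - G t) = (t * F t - t * G t) - c * (F t - G t))
    by (intros; ring).
  split.
  - apply (ex_RInt_ext_R (fun t => (t * F t - t * G t) - c * (F t - G t)));
      [intros; symmetry; apply Hsplit|].
    exact (ex_RInt_minus _ _ x y Hmom Hcmass).
  - rewrite (RInt_ext_R _ (fun t => (t * F t - t * G t) - c * (F t - G t)))
      by (intros; apply Hsplit).
    assert (E1 : RInt (fun t => (t * F t - t * G t) - c * (F t - G t)) x y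
                 = RInt (fun t => t * F t - t * G t) x y
                   - RInt (fun t => c * (F t - G t)) x y)
      by exact (RInt_minus _ _ x y Hmom Hcmass).
    assert (E2 : RInt (fun t => t * F t - t * G t) x y
                 = RInt (fun t => t * F t) x y - RInt (fun t => t * G t) x y)
      by exact (RInt_minus _ _ x y HtF HtG).
    assert (E3 : RInt (fun t => c * (F t - G t)) x y
                 = c * RInt (fun t => F t - G t) x y)
      by exact (RInt_scal _ x y c Hmass).
    assert (E4 : RInt (fun t => F t - G t) x y = RInt F x y - RInt G x y)
      by exact (RInt_minus _ _ x y HF HG).
    rewrite E1, E2, E3, E4.
    reflexivity.
Qed.

Lemma RInt_affine_pow (k : nat) (A s x y : R) : s <> 0 ->
  RInt (fun t => (A + s * t) ^ k) x y
  = ((A + s * y) ^ S k - (A + s * x) ^ S k) / (INR (S k) * s) :> R.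
Proof.
  intros Hs.
  assert (0 < INR (S k)) by (apply lt_0_INR; lia).
  set (prim := fun t => (A + s * t) ^ S k / (INR (S k) * s)).
  transitivity (prim y - prim x); [|unfold prim; field; lra].
  apply is_RInt_unique, (is_RInt_derive prim).
  - intros t _; unfold prim; auto_derive; [repeat split; lra|].
    change (match k with 0%nat => 1 | S _ => INR k + 1 end) with (INR (S k)).
    field; lra.
  - intros t _; apply (ex_derive_continuous (fun t => (A + s * t) ^ k)).
    auto_derive; exact I.
Qed.

Lemma RInt_affine_pow_moment (k : nat) (A s x y : R) : s <> 0 ->
  RInt (fun t => t * (A + s * t) ^ k) x y
  = (((A + s * y) ^ S (S k) - (A + s * x) ^ S (S k)) / (INR (S (S k)) * s)
     - A * ((A + s * y) ^ S k - (A + s * x) ^ S k) / (INR (S k) * s)) / s :> R.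
Proof.
  intros Hs.
  assert (0 < INR (S k)) by (apply lt_0_INR; lia).
  assert (0 < INR (S (S k))) by (apply lt_0_INR; lia).
  set (prim := fun t => ((A + s * t) ^ S (S k) / (INR (S (S k)) * s)
                         - A * (A + s * t) ^ S k / (INR (S k) * s)) / s).
  transitivity (prim y - prim x); [|unfold prim; field; lra].
  apply is_RInt_unique, (is_RInt_derive prim).
  - intros t _; unfold prim; auto_derive; [repeat split; lra|].
    change (match k with 0%nat => 1 | S _ => INR k + 1 end) with (INR (S k)).
    rewrite <- S_INR; field; lra.
  - intros t _; apply (ex_derive_continuous (fun t => t * (A + s * t) ^ k)).
    auto_derive; exact I.
Qed.

Lemma continuous_affine_pow (k : nat) (A s t : R) :
  continuous (fun t => (A + s * t) ^ k) t.
Proof. apply (ex_derive_continuous (fun t => (A + s * t) ^ k)); auto_derive; exact I. Qed.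

Lemma ex_RInt_affine_pow (k : nat) (A s x y : R) :
  ex_RInt (fun t => (A + s * t) ^ k) x y.
Proof.
  apply (ex_RInt_continuous (V := R_CompleteNormedModule)); intros.
  apply continuous_affine_pow.
Qed.

Lemma ex_RInt_affine_pow_moment (k : nat) (A s x y : R) :
  ex_RInt (fun t => t * (A + s * t) ^ k) x y.
Proof.
  apply (ex_RInt_continuous (V := R_CompleteNormedModule)); intros z _.
  apply (ex_derive_continuous (fun t => t * (A + s * t) ^ k)); auto_derive; exact I.
Qed.

Lemma affine_power_barycentre (m : nat) (k a b : R) :
  0 < k -> 0 < a -> 0 < b ->
  RInt (fun t => t * (k * a + k * t) ^ m) (- a) b = 0 -> a = INR (S m) * b.
Proof.
  intros Hk Ha Hb Hmom.
  pose proof (lt_0_INR (S m) ltac:(lia)); pose proof (lt_0_INR (S (S m)) ltac:(lia)).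
  rewrite RInt_affine_pow_moment in Hmom by lra.
  replace (k * a + k * - a) with 0 in Hmom by ring.
  rewrite !pow_i in Hmom by lia.
  set (L := k * a + k * b) in Hmom.
  assert (HL : 0 < L) by (unfold L; nra).
  assert (Hlin : L ^ S m * (INR (S (S m)) * k * b - L) = 0).
  { apply (Rmult_eq_reg_r (/ (INR (S m) * INR (S (S m)) * k ^ 2))).
    2:{ apply Rinv_neq_0_compat, Rgt_not_eq, Rmult_lt_0_compat; [nra|apply pow_lt; lra]. }
    rewrite Rmult_0_l, <- Hmom, (S_INR (S m)).
    change (L ^ S (S m)) with (L * L ^ S m); unfold L; field; lra. }
  apply Rmult_integral in Hlin as [HLn|Hlin]; [pose proof (pow_lt L (S m) HL); lra|].
  unfold L in Hlin; rewrite S_INR in Hlin.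
  apply (Rmult_eq_reg_l k); lra.
Qed.

Lemma affine_power_mass_ratio (m : nat) (k a b : R) :
  0 < k -> 0 < b -> a = INR (S m) * b ->
  RInt (fun t => (k * a + k * t) ^ m) 0 b / RInt (fun t => (k * a + k * t) ^ m) (- a) 0
  = (1 + / INR (S m)) ^ S m - 1.
Proof.
  intros Hk Hb Hab.
  pose proof (lt_0_INR (S m) ltac:(lia)).
  assert (Ha : 0 < a) by nra.
  rewrite !RInt_affine_pow by lra.
  replace (k * a + k * - a) with 0 by ring.
  replace (k * a + k * 0) with (k * a) by ring.
  replace (k * a + k * b) with (k * a * (1 + / INR (S m))) by (rewrite Hab; field; lra).
  rewrite pow_i by lia.
  pose proof (pow_lt (k * a) (S m) ltac:(nra)).
  rewrite Rpow_mult_distr; field; lra.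
Qed.

Section BarycentricProfile.

Variables (m : nat) (a b : R) (f : R -> R).
Local Notation n := (S m).

Hypothesis Hm : (1 <= m)%nat.
Hypothesis Ha : 0 < a.
Hypothesis Hb : 0 < b.
Hypothesis Hcont : continuous_on_interval f (- a) b.
Hypothesis Hnonneg : forall t, - a <= t <= b -> 0 <= f t.
Hypothesis Hpos : forall t, - a < t < b -> 0 < f t.
Hypothesis Hconc : concave_on (fun t => nonneg_root m (f t)) (- a) b.
Hypothesis Hint : ex_RInt f (- a) b.
Hypothesis Hint_moment : ex_RInt (fun t => t * f t) (- a) b.
Hypothesis Hbary : RInt (fun t => t * f t) (- a) b = 0.

Let h (t : R) : R := nonneg_root m (f t).
Let h0 : R := h 0.
Let N : R := RInt f (- a) 0.
Let P : R := RInt f 0 b.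
(* The comparison profile: the affine function ell through (0, h0) whose
   m-th power, cut off at its zero, carries the same mass N as f on the
   negative side. *)
Let s : R := h0 ^ n / (INR n * N).
Let ell (t : R) : R := h0 + s * t.

Lemma INR_n_pos : 0 < INR n.
Proof. apply lt_0_INR; lia. Qed.

Lemma INR_Sn_pos : 0 < INR (S n).
Proof. apply lt_0_INR; lia. Qed.

Lemma f_eq_pow (t : R) : - a <= t <= b -> f t = h t ^ m.
Proof. intros Ht; unfold h; rewrite nonneg_root_pow; auto. Qed.

Lemma h_nonneg (t : R) : 0 <= h t.
Proof. apply nonneg_root_nonneg. Qed.

Lemma h0_pos : 0 < h0.
Proof. apply nonneg_root_pos, Hpos; lra. Qed.

Lemma h_chord (u t v : R) :
  - a <= u -> u < v -> v <= b -> u <= t <= v ->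
  (v - t) * h u + (t - u) * h v <= (v - u) * h t.
Proof. exact (concave_above_chord h (- a) b u t v Hconc). Qed.

Lemma ex_RInt_f (x y : R) : - a <= x -> x <= y -> y <= b -> ex_RInt f x y.
Proof. intros; apply (ex_RInt_sub_interval f (- a) b); assumption. Qed.

Lemma ex_RInt_moment_f (x y : R) :
  - a <= x -> x <= y -> y <= b -> ex_RInt (fun t => t * f t) x y.
Proof. intros; apply (ex_RInt_sub_interval _ (- a) b); assumption. Qed.

(* Concavity and h(-a) >= 0 put h above the line through (-a, 0) and
   (0, h0); integrating its m-th power bounds the negative mass below. *)
Lemma N_lower_bound : h0 ^ m * a <= INR n * N.
Proof.
  assert (Hh0 := h0_pos); assert (Hn := INR_n_pos).
  set (k := h0 / a).
  assert (Hk : 0 < k) by (unfold k; apply Rdiv_lt_0_compat; lra).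
  assert (Hline : forall t, - a <= t <= 0 -> 0 <= h0 + k * t <= h t).
  { intros t Ht; split.
    - replace (h0 + k * t) with (k * (t + a)) by (unfold k; field; lra); nra.
    - pose proof (h_chord (- a) t 0 ltac:(lra) ltac:(lra) ltac:(lra) Ht) as Hc.
      pose proof (h_nonneg (- a)).
      apply (Rmult_le_reg_l a); [exact Ha|].
      replace (a * (h0 + k * t)) with ((t + a) * h0) by (unfold k; field; lra).
      fold h0 in Hc; nra. }
  assert (Hle : RInt (fun t => (h0 + k * t) ^ m) (- a) 0 <= N).
  { apply RInt_le; [lra|apply ex_RInt_affine_pow|apply ex_RInt_f; lra|].
    intros t Ht; rewrite f_eq_pow by lra; apply pow_incr, Hline; lra. }
  rewrite RInt_affine_pow in Hle by lra.
  replace (h0 + k * - a) with 0 in Hle by (unfold k; field; lra).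
  replace (h0 + k * 0) with h0 in Hle by ring.
  rewrite pow_i in Hle by lia.
  apply (Rmult_le_compat_l (INR n)) in Hle; [|lra].
  replace (INR n * ((h0 ^ n - 0) / (INR n * k))) with (h0 ^ m * a) in Hle
    by (unfold k; change (h0 ^ n) with (h0 * h0 ^ m); field; lra).
  exact Hle.
Qed.

Lemma N_pos : 0 < N.
Proof.
  pose proof N_lower_bound; pose proof INR_n_pos.
  assert (0 < h0 ^ m * a) by (apply Rmult_lt_0_compat; [apply pow_lt, h0_pos|exact Ha]).
  nra.
Qed.

Lemma s_pos : 0 < s.
Proof.
  apply Rdiv_lt_0_compat; [apply pow_lt, h0_pos|].
  apply Rmult_lt_0_compat; [apply INR_n_pos|apply N_pos].
Qed.

Lemma N_eq : N = h0 ^ n / (INR n * s).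
Proof.
  pose proof INR_n_pos; pose proof N_pos; pose proof (pow_lt h0 n h0_pos).
  unfold s; field; lra.
Qed.

(* The zero -h0/s of ell lies to the left of -a, so ell >= 0 on [-a, b]. *)
Lemma s_a_le_h0 : s * a <= h0.
Proof.
  pose proof N_lower_bound; pose proof N_pos; pose proof INR_n_pos.
  pose proof h0_pos; pose proof (pow_lt h0 m h0_pos).
  apply (Rmult_le_reg_r (INR n * N)); [nra|].
  replace (s * a * (INR n * N)) with (h0 * (h0 ^ m * a))
    by (unfold s; change (h0 ^ n) with (h0 * h0 ^ m); field; lra).
  apply Rmult_le_compat_l; lra.
Qed.

Lemma ell_nonneg (t : R) : - a <= t -> 0 <= ell t.
Proof. intros Ht; pose proof s_a_le_h0; pose proof s_pos; unfold ell; nra. Qed.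

Lemma ell_0 : ell 0 = h0.
Proof. unfold ell; ring. Qed.

Lemma mass_ell (x y : R) :
  RInt (fun t => ell t ^ m) x y = (ell y ^ n - ell x ^ n) / (INR n * s).
Proof. pose proof s_pos; apply RInt_affine_pow; lra. Qed.

Lemma moment_ell (x y : R) :
  RInt (fun t => t * ell t ^ m) x y
  = ((ell y ^ S n - ell x ^ S n) / (INR (S n) * s)
     - h0 * (ell y ^ n - ell x ^ n) / (INR n * s)) / s.
Proof. pose proof s_pos; apply RInt_affine_pow_moment; lra. Qed.

Lemma ex_RInt_ell (x y : R) : ex_RInt (fun t => ell t ^ m) x y.
Proof. apply ex_RInt_affine_pow. Qed.

Lemma ex_RInt_moment_ell (x y : R) : ex_RInt (fun t => t * ell t ^ m) x y.
Proof. apply ex_RInt_affine_pow_moment. Qed.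

Lemma continuous_f_minus_ell (x y : R) :
  - a <= x -> y <= b -> continuous_on_interval (fun t => f t - ell t ^ m) x y.
Proof.
  intros Hx Hy; apply continuous_on_interval_minus.
  - apply (continuous_on_interval_sub f (- a) b); assumption.
  - apply continuous_on_interval_of_continuous; intros; apply continuous_affine_pow.
Qed.

(* On [-a, 0] the concave h crosses the affine ell at most once, from below:
   hence f - ell^m changes sign at most once there, at some c. *)
Lemma neg_single_crossing :
  exists c, - a <= c <= 0 /\
    forall t, - a < t < 0 -> 0 <= (t - c) * (f t - ell t ^ m).
Proof.
  destruct (sign_change_point (fun t => h t - ell t) (- a) 0)
    as [c [Hc [Hbelow Habove]]].
  - lra.
  - rewrite ell_0; fold h0; lra.
  - intros u t Hu Hut Ht Hhu.
    destruct (Req_dec u 0) as [->|Hu0]; [replace t with 0 by lra; exact Hhu|].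
    pose proof (h_chord u t 0 Hu ltac:(lra) ltac:(lra) ltac:(lra)) as Hc.
    fold h0 in Hc; unfold ell in *.
    assert (- t * (h0 + s * u) <= - t * h u) by (apply Rmult_le_compat_l; lra).
    apply (Rmult_le_reg_l (- u)); lra.
  - exists c; split; [exact Hc|].
    intros t Ht; rewrite f_eq_pow by lra.
    destruct (Rlt_le_dec t c) as [Htc|Htc].
    + specialize (Hbelow t ltac:(lra)).
      assert (h t ^ m <= ell t ^ m)
        by (apply pow_incr; split; [apply h_nonneg|lra]).
      nra.
    + destruct (Req_dec t c) as [->|Hne]; [lra|].
      specialize (Habove t ltac:(lra)).
      assert (ell t ^ m <= h t ^ m)
        by (apply pow_incr; split; [apply ell_nonneg; lra|lra]).
      nra.
Qed.

(* The moment of f on [-a, 0] equals that of the full cut-off profile plus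
   three nonnegative terms: the moment of f - ell^m about the crossing c,
   and two terms measuring the part of the profile left of -a. *)
Lemma neg_moment_split :
  exists c, - a <= c <= 0 /\
    (forall t, - a < t < 0 -> 0 <= (t - c) * (f t - ell t ^ m)) /\
    ex_RInt (fun t => (t - c) * (f t - ell t ^ m)) (- a) 0 /\
    RInt (fun t => t * f t) (- a) 0
    = - h0 ^ S n / (INR n * INR (S n) * s ^ 2)
      + (c + a) * (ell (- a) ^ n / (INR n * s))
      + ell (- a) ^ S n / (INR n * INR (S n) * s ^ 2)
      + RInt (fun t => (t - c) * (f t - ell t ^ m)) (- a) 0.
Proof.
  pose proof INR_n_pos; pose proof s_pos.
  destruct neg_single_crossing as [c [Hc Hsign]].
  destruct (RInt_shifted_moment f (fun t => ell t ^ m) (- a) 0 c)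
    as [Hex HI];
    [apply ex_RInt_f; lra|apply ex_RInt_ell|apply ex_RInt_moment_f; lra|
     apply ex_RInt_moment_ell|].
  exists c; do 3 (split; [assumption|]).
  rewrite mass_ell, moment_ell, ell_0 in HI; fold N in HI.
  set (la := ell (- a)) in *.
  assert (Hla_a : a = (h0 - la) / s) by (unfold la, ell; field; lra).
  assert (Alg : forall M J : R,
             J = M - ((h0 ^ S n - la ^ S n) / (INR (S n) * s)
                      - h0 * (h0 ^ n - la ^ n) / (INR n * s)) / s
                 - c * (N - (h0 ^ n - la ^ n) / (INR n * s)) ->
             M = - h0 ^ S n / (INR n * INR (S n) * s ^ 2)
                 + (c + a) * (la ^ n / (INR n * s))
                 + la ^ S n / (INR n * INR (S n) * s ^ 2) + J).
  { intros M J ->; rewrite N_eq, Hla_a, (S_INR n).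
    change (h0 ^ S n) with (h0 * h0 ^ n); change (la ^ S n) with (la * la ^ n).
    field; lra. }
  exact (Alg _ _ HI).
Qed.

Lemma neg_moment_bound :
  - h0 ^ S n / (INR n * INR (S n) * s ^ 2) <= RInt (fun t => t * f t) (- a) 0 /\
  (RInt (fun t => t * f t) (- a) 0 = - h0 ^ S n / (INR n * INR (S n) * s ^ 2) ->
   ell (- a) = 0 /\ forall t, - a <= t <= 0 -> f t = ell t ^ m).
Proof.
  pose proof INR_n_pos; pose proof INR_Sn_pos; pose proof s_pos.
  destruct neg_moment_split as [c [Hc [Hsign [Hex Hsplit]]]].
  set (I := RInt (fun t => (t - c) * (f t - ell t ^ m)) (- a) 0) in *.
  set (la := ell (- a)) in *.
  assert (Hla : 0 <= la) by (apply ell_nonneg; lra).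
  assert (HD : 0 < INR n * INR (S n) * s ^ 2)
    by (apply Rmult_lt_0_compat; [nra|apply pow_lt; lra]).
  assert (HI : 0 <= I) by (apply RInt_ge_0; [lra|exact Hex|exact Hsign]).
  assert (HX : 0 <= (c + a) * (la ^ n / (INR n * s)))
    by (apply Rmult_le_pos; [lra|apply Rdiv_le_0_compat; [apply pow_le|]; nra]).
  assert (HY : 0 <= la ^ S n / (INR n * INR (S n) * s ^ 2))
    by (apply Rdiv_le_0_compat; [apply pow_le|]; lra).
  split; [lra|].
  intros Heq.
  assert (HI0 : I = 0) by lra.
  split.
  - apply (pow_inj_nonneg _ _ (S n)); [lia|exact Hla|lra|].
    rewrite pow_i by lia.
    apply (Rmult_eq_reg_r (/ (INR n * INR (S n) * s ^ 2)));
      [|apply Rinv_neq_0_compat; lra].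
    rewrite Rmult_0_l; fold (Rdiv (la ^ S n) (INR n * INR (S n) * s ^ 2)); lra.
  - intros t Ht.
    enough (f t - ell t ^ m = 0) by lra.
    apply (RInt_weighted_zero (fun t => f t - ell t ^ m) (- a) 0 c);
      try assumption; try lra.
    apply continuous_f_minus_ell; lra.
Qed.

(* On [0, b], h stays below ell: otherwise concavity would push h strictly
   below ell on [-a, 0), and the negative mass N would fall short of the
   mass of ell^m there, which is at most N by the choice of s. *)
Lemma h_le_ell_pos (t : R) : 0 <= t <= b -> h t <= ell t.
Proof.
  intros Ht; apply Rnot_lt_le; intros Hgt.
  pose proof s_pos; pose proof INR_n_pos.
  assert (Ht0 : 0 < t).
  { destruct (Req_dec t 0) as [->|]; [|lra].
    fold h0 in Hgt; rewrite ell_0 in Hgt; lra. }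
  assert (Hstrict : forall u, - a <= u < 0 -> h u < ell u).
  { intros u Hu.
    pose proof (h_chord u 0 t ltac:(lra) ltac:(lra) ltac:(lra) ltac:(lra)) as Hc.
    fold h0 in Hc; unfold ell in *.
    assert (- u * (h0 + s * t) < - u * h t) by (apply Rmult_lt_compat_l; lra).
    apply (Rmult_lt_reg_l t); lra. }
  assert (Hex_f : ex_RInt f (- a) 0) by (apply ex_RInt_f; lra).
  assert (Hgap : 0 < RInt (fun u => ell u ^ m - f u) (- a) 0).
  { apply (RInt_pos_of_pos_point _ (- a) 0 (- a / 2)); try lra.
    - exact (ex_RInt_minus _ _ _ _ (ex_RInt_ell _ _) Hex_f).
    - intros u Hu; rewrite f_eq_pow by lra.
      enough (h u ^ m <= ell u ^ m) by lra.
      apply pow_incr; split; [apply h_nonneg|left; apply Hstrict; lra].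
    - apply continuous_on_interval_minus.
      + apply continuous_on_interval_of_continuous; intros; apply continuous_affine_pow.
      + apply (continuous_on_interval_sub f (- a) b); [exact Hcont|lra|lra].
    - rewrite f_eq_pow by lra.
      enough (h (- a / 2) ^ m < ell (- a / 2) ^ m) by lra.
      apply pow_lt_compat_nonneg; [exact Hm|split; [apply h_nonneg|apply Hstrict; lra]]. }
  assert (Hmass : RInt (fun u => ell u ^ m - f u) (- a) 0
                  = RInt (fun u => ell u ^ m) (- a) 0 - N)
    by exact (RInt_minus _ _ _ _ (ex_RInt_ell _ _) Hex_f).
  rewrite Hmass, mass_ell, ell_0, N_eq in Hgap.
  replace ((h0 ^ n - ell (- a) ^ n) / (INR n * s) - h0 ^ n / (INR n * s))
    with (- (ell (- a) ^ n / (INR n * s))) in Hgap by (field; lra).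
  assert (0 <= ell (- a) ^ n / (INR n * s))
    by (apply Rdiv_le_0_compat; [apply pow_le, ell_nonneg; lra|nra]).
  lra.
Qed.

Lemma f_le_ell_pow_pos (t : R) : 0 <= t <= b -> f t <= ell t ^ m.
Proof.
  intros Ht; rewrite f_eq_pow by lra.
  apply pow_incr; split; [apply h_nonneg|apply h_le_ell_pos; exact Ht].
Qed.

Lemma P_nonneg : 0 <= P.
Proof.
  apply RInt_ge_0; [lra|apply ex_RInt_f; lra|].
  intros; apply Hnonneg; lra.
Qed.

Lemma nsP_nonneg : 0 <= INR n * s * P.
Proof.
  apply Rmult_le_pos; [apply Rmult_le_pos|apply P_nonneg].
  - left; apply INR_n_pos.
  - left; apply s_pos.
Qed.

(* The positive mass P is carried by ell^m on [0, beta], where ell(beta) = u. *)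
Let u : R := nonneg_root n (h0 ^ n + INR n * s * P).
Let beta : R := (u - h0) / s.

Lemma u_pow : u ^ n = h0 ^ n + INR n * s * P.
Proof.
  apply nonneg_root_pow; [lia|].
  pose proof (pow_lt h0 n h0_pos); pose proof nsP_nonneg; lra.
Qed.

Lemma ell_beta : ell beta = u.
Proof. pose proof s_pos; unfold ell, beta; field; lra. Qed.

Lemma P_eq : P = (u ^ n - h0 ^ n) / (INR n * s).
Proof. pose proof s_pos; pose proof INR_n_pos; rewrite u_pow; field; lra. Qed.

Lemma beta_range : 0 <= beta <= b.
Proof.
  pose proof s_pos; pose proof INR_n_pos; pose proof h0_pos; pose proof P_nonneg.
  assert (Hu0 : 0 <= u) by apply nonneg_root_nonneg.
  assert (Hell_b : 0 <= ell b) by (apply ell_nonneg; lra).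
  (* P <= mass of ell^m on [0, b], since f <= ell^m there *)
  assert (HPle : P <= (ell b ^ n - h0 ^ n) / (INR n * s)).
  { rewrite <- ell_0, <- mass_ell.
    apply RInt_le; [lra|apply ex_RInt_f; lra|apply ex_RInt_ell|].
    intros; apply f_le_ell_pow_pos; lra. }
  rewrite P_eq in HPle.
  assert (Hpow : u ^ n <= ell b ^ n).
  { apply (Rmult_le_reg_r (/ (INR n * s))); [apply Rinv_0_lt_compat; nra|].
    unfold Rdiv in HPle; nra. }
  assert (Hh0u : h0 <= u).
  { apply Rnot_lt_le; intros Hlt.
    pose proof (pow_lt_compat_nonneg u h0 n ltac:(lia) (conj Hu0 Hlt)).
    pose proof u_pow; pose proof nsP_nonneg; lra. }
  assert (Hub : u <= ell b).
  { apply Rnot_lt_le; intros Hlt.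
    pose proof (pow_lt_compat_nonneg (ell b) u n ltac:(lia) (conj Hell_b Hlt)); lra. }
  unfold beta; split.
  - apply Rdiv_le_0_compat; lra.
  - apply (Rmult_le_reg_r s); [lra|].
    unfold ell in Hub; replace ((u - h0) / s * s) with (u - h0) by (field; lra); lra.
Qed.

Lemma mass_ell_beta : RInt (fun t => ell t ^ m) 0 beta = P.
Proof. rewrite mass_ell, ell_beta, ell_0, P_eq; reflexivity. Qed.

Let J_in : R := RInt (fun t => (t - beta) * (f t - ell t ^ m)) 0 beta.
Let J_out : R := RInt (fun t => (t - beta) * (f t - 0)) beta b.

Lemma shifted_moment_in :
  ex_RInt (fun t => (t - beta) * (f t - ell t ^ m)) 0 beta /\
  J_in = (RInt (fun t => t * f t) 0 beta - RInt (fun t => t * ell t ^ m) 0 beta)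
         - beta * (RInt f 0 beta - P).
Proof.
  destruct beta_range; rewrite <- mass_ell_beta.
  apply RInt_shifted_moment;
    [apply ex_RInt_f; lra|apply ex_RInt_ell|apply ex_RInt_moment_f; lra|
     apply ex_RInt_moment_ell].
Qed.

Lemma shifted_moment_out :
  ex_RInt (fun t => (t - beta) * (f t - 0)) beta b /\
  J_out = RInt (fun t => t * f t) beta b - beta * RInt f beta b.
Proof.
  destruct beta_range.
  destruct (RInt_shifted_moment f (fun _ => 0) beta b beta) as [Hex HJ];
    [apply ex_RInt_f; lra|apply ex_RInt_const|apply ex_RInt_moment_f; lra|
     apply (ex_RInt_ext_R (fun _ => 0)); [intros; ring|apply ex_RInt_const]|].
  split; [exact Hex|].
  rewrite (RInt_ext_R (fun t => t * 0) (fun _ => 0)), !RInt_zero_fun in HJ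
    by (intros; ring).
  unfold J_out; rewrite HJ; ring.
Qed.

Lemma pos_moment_split :
  RInt (fun t => t * f t) 0 b = RInt (fun t => t * ell t ^ m) 0 beta + J_in + J_out :> R.
Proof.
  destruct beta_range.
  rewrite (proj2 shifted_moment_in), (proj2 shifted_moment_out).
  rewrite <- (RInt_Chasles_R (fun t => t * f t) 0 beta b)
    by (apply ex_RInt_moment_f; lra).
  unfold P; rewrite <- (RInt_Chasles_R f 0 beta b) by (apply ex_RInt_f; lra).
  ring.
Qed.

Lemma J_in_nonneg : 0 <= J_in.
Proof.
  destruct beta_range.
  apply RInt_ge_0; [lra|exact (proj1 shifted_moment_in)|].
  intros t Ht; pose proof (f_le_ell_pow_pos t ltac:(lra)); nra.
Qed.

Lemma J_out_nonneg : 0 <= J_out.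
Proof.
  destruct beta_range.
  apply RInt_ge_0; [lra|exact (proj1 shifted_moment_out)|].
  intros t Ht; pose proof (Hnonneg t ltac:(lra)); nra.
Qed.

(* J_out can only vanish if [beta, b] is trivial, since f > 0 inside. *)
Lemma J_out_zero : J_out = 0 -> beta = b.
Proof.
  intros HJ; destruct beta_range as [Hbeta0 [Hlt|Heq]]; [exfalso|exact Heq].
  pose proof (Hpos ((beta + b) / 2) ltac:(lra)).
  enough (f ((beta + b) / 2) - 0 = 0) by lra.
  apply (RInt_weighted_zero (fun t => f t - 0) beta b beta Hlt); try lra.
  - apply continuous_on_interval_minus.
    + apply (continuous_on_interval_sub f (- a) b); [exact Hcont|lra|lra].
    + apply continuous_on_interval_of_continuous; intros; apply continuous_const.
  - exact (proj1 shifted_moment_out).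
  - intros t Ht; pose proof (Hnonneg t ltac:(lra)); nra.
  - exact HJ.
Qed.

(* Positive side: f <= ell^m on [0, b] and both carry mass P, so f's mass
   sits further right than that of ell^m restricted to [0, beta]; equality
   forces beta = b and f = ell^m on [0, b]. *)
Lemma pos_moment_bound :
  RInt (fun t => t * ell t ^ m) 0 beta <= RInt (fun t => t * f t) 0 b /\
  (RInt (fun t => t * f t) 0 b = RInt (fun t => t * ell t ^ m) 0 beta ->
   forall t, 0 <= t <= b -> f t = ell t ^ m).
Proof.
  pose proof pos_moment_split; pose proof J_in_nonneg; pose proof J_out_nonneg.
  split; [lra|].
  intros Heq.
  assert (HJ_in : J_in = 0) by lra.
  pose proof (J_out_zero ltac:(lra)) as Hbeta_b.
  pose proof (proj1 shifted_moment_in) as Hex.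
  unfold J_in in HJ_in; rewrite Hbeta_b in Hex, HJ_in.
  intros t Ht.
  enough (f t - ell t ^ m = 0) by lra.
  apply (RInt_weighted_zero (fun t => f t - ell t ^ m) 0 b b); try assumption; try lra.
  - apply continuous_f_minus_ell; lra.
  - intros x Hx; pose proof (f_le_ell_pow_pos x ltac:(lra)); nra.
Qed.

Lemma profile_moment_gap :
  h0 ^ S n / (INR n * INR (S n) * s ^ 2) - RInt (fun t => t * ell t ^ m) 0 beta
  = u ^ n * (INR (S n) * h0 - INR n * u) / (INR n * INR (S n) * s ^ 2).
Proof.
  pose proof s_pos; pose proof INR_n_pos.
  rewrite moment_ell, ell_beta, ell_0, (S_INR n).
  change (u ^ S n) with (u * u ^ n); change (h0 ^ S n) with (h0 * h0 ^ n).
  field; lra.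
Qed.

Lemma barycentre_split :
  RInt (fun t => t * f t) (- a) 0 + RInt (fun t => t * f t) 0 b = 0.
Proof. rewrite RInt_Chasles_R by (apply ex_RInt_moment_f; lra); exact Hbary. Qed.

Lemma u_pow_pos : 0 < u ^ n.
Proof. rewrite u_pow; pose proof (pow_lt h0 n h0_pos); pose proof nsP_nonneg; lra. Qed.

Lemma u_upper_bound : INR n * u <= INR (S n) * h0.
Proof.
  pose proof s_pos; pose proof INR_n_pos; pose proof INR_Sn_pos; pose proof u_pow_pos.
  destruct neg_moment_bound as [Hneg_side _]; destruct pos_moment_bound as [Hpos_side _].
  pose proof barycentre_split; pose proof profile_moment_gap as Hgap.
  set (D := INR n * INR (S n) * s ^ 2) in *.
  assert (HD : 0 < D) by (apply Rmult_lt_0_compat; [nra|apply pow_lt; lra]).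
  set (X := u ^ n * (INR (S n) * h0 - INR n * u)) in *.
  assert (HX : 0 <= X).
  { replace X with (X / D * D) by (field; lra).
    apply Rmult_le_pos; [|lra].
    rewrite <- Hgap; unfold Rdiv in *; lra. }
  unfold X in HX; nra.
Qed.

Lemma mass_ratio_eq : P / N = (u / h0) ^ n - 1.
Proof.
  pose proof s_pos; pose proof INR_n_pos; pose proof h0_pos.
  pose proof (pow_lt h0 n h0_pos).
  rewrite P_eq, N_eq; unfold Rdiv; rewrite Rpow_mult_distr, pow_inv.
  field; lra.
Qed.

Lemma extremal_profile :
  INR n * u = INR (S n) * h0 ->
  affine_on h (- a) b /\ h (- a) = 0.
Proof.
  intros Hu.
  pose proof s_pos; pose proof INR_n_pos; pose proof INR_Sn_pos.
  destruct neg_moment_bound as [Hneg_side Hneg_eq].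
  destruct pos_moment_bound as [Hpos_side Hpos_eq].
  pose proof barycentre_split; pose proof profile_moment_gap as Hgap.
  replace (INR (S n) * h0 - INR n * u) with 0 in Hgap by lra.
  rewrite Rmult_0_r, Rdiv_0_l in Hgap.
  destruct Hneg_eq as [Hla Hf_neg]; [lra|].
  specialize (Hpos_eq ltac:(lra)).
  assert (Hh : forall t, - a <= t <= b -> h t = ell t).
  { intros t Ht; unfold h.
    rewrite <- (nonneg_root_of_pow m (ell t)) by (auto; apply ell_nonneg; lra).
    f_equal; destruct (Rle_dec t 0); [apply Hf_neg|apply Hpos_eq]; lra. }
  split.
  - exists s, h0; intros t Ht; rewrite Hh by exact Ht; unfold ell; ring.
  - rewrite Hh by lra; exact Hla.
Qed.

Lemma affine_profile_ratio :
  affine_on h (- a) b -> h (- a) = 0 -> P / N = (1 + / INR n) ^ n - 1.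
Proof.
  intros [k [d Haff]] Hha.
  pose proof h0_pos.
  assert (Hd : d = h0) by (unfold h0; rewrite Haff by lra; ring).
  assert (Hka : k * a = h0) by (rewrite Haff in Hha by lra; lra).
  assert (Hk : 0 < k) by nra.
  assert (Hf : forall t, - a <= t <= b -> f t = (k * a + k * t) ^ m)
    by (intros t Ht; rewrite f_eq_pow, Haff by exact Ht; f_equal; lra).
  assert (Hext : forall x y, - a <= x -> x <= y -> y <= b ->
            RInt f x y = RInt (fun t => (k * a + k * t) ^ m) x y)
    by (intros x y ? ? ?; apply RInt_ext_closed; [lra|intros; apply Hf; lra]).
  unfold P, N; rewrite !Hext by lra.
  apply (affine_power_mass_ratio m k a b Hk Hb).
  apply (affine_power_barycentre m k a b Hk Ha Hb).
  rewrite <- Hbary; apply RInt_ext_closed; [lra|].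
  intros t Ht; rewrite Hf by exact Ht; reflexivity.
Qed.

Theorem barycentric_mass_ratio :
  RInt f 0 b / RInt f (- a) 0 <= (1 + / INR n) ^ n - 1 /\
  (RInt f 0 b / RInt f (- a) 0 = (1 + / INR n) ^ n - 1 <->
   affine_on (fun t => nonneg_root m (f t)) (- a) b /\ nonneg_root m (f (- a)) = 0).
Proof.
  change (P / N <= (1 + / INR n) ^ n - 1 /\
          (P / N = (1 + / INR n) ^ n - 1 <-> affine_on h (- a) b /\ h (- a) = 0)).
  pose proof INR_n_pos; pose proof h0_pos; pose proof u_upper_bound.
  assert (Hq0 : 0 <= u / h0)
    by (apply Rdiv_le_0_compat; [apply nonneg_root_nonneg|lra]).
  assert (Hgap : 1 + / INR n - u / h0 = (INR (S n) * h0 - INR n * u) / (INR n * h0))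
    by (rewrite (S_INR n); field; lra).
  assert (Hq : u / h0 <= 1 + / INR n).
  { enough (0 <= (INR (S n) * h0 - INR n * u) / (INR n * h0)) by lra.
    apply Rdiv_le_0_compat; nra. }
  split; [|split].
  - rewrite mass_ratio_eq; pose proof (pow_incr _ _ n (conj Hq0 Hq)); lra.
  - rewrite mass_ratio_eq; intros Heq; apply extremal_profile.
    assert (Hq1 : u / h0 = 1 + / INR n).
    { apply (pow_inj_nonneg _ _ n); [lia|exact Hq0|lra|lra]. }
    rewrite Hq1, Rminus_diag in Hgap.
    apply (Rmult_eq_reg_r (/ (INR n * h0))); [|apply Rinv_neq_0_compat; nra].
    enough (INR (S n) * h0 * / (INR n * h0) - INR n * u * / (INR n * h0) = 0) by lra.
    rewrite Hgap; field; lra.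
  - intros [Haff Hz]; apply affine_profile_ratio; assumption.
Qed.

End BarycentricProfile.

Theorem claim4 (n : nat) (a b : R) (f : R -> R)
  (Hn : (2 <= n)%nat) (Ha : 0 < a) (Hb : 0 < b)
  (Hcont : continuous_on_interval f (- a) b)
  (Hnonneg : forall t, - a <= t <= b -> 0 <= f t)
  (Hpos : forall t, - a < t < b -> 0 < f t)
  (Hconc : concave_on (fun t => nonneg_root (n - 1) (f t)) (- a) b)
  (pr_mom : Riemann_integrable (fun t => t * f t) (- a) b)
  (Hbary : RiemannInt pr_mom = 0)
  (pr_pos : Riemann_integrable f 0 b)
  (pr_neg : Riemann_integrable f (- a) 0) :
  RiemannInt pr_pos / RiemannInt pr_neg <= (1 + / INR n) ^ n - 1 /\
  (RiemannInt pr_pos / RiemannInt pr_neg = (1 + / INR n) ^ n - 1 <->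
     (affine_on (fun t => nonneg_root (n - 1) (f t)) (- a) b /\
      nonneg_root (n - 1) (f (- a)) = 0)).
Proof.
  destruct n as [|m]; [lia|].
  replace (S m - 1)%nat with m in * by lia.
  rewrite <- (RInt_Reals _ _ _ pr_pos), <- (RInt_Reals _ _ _ pr_neg).
  apply barycentric_mass_ratio; try assumption; [lia| |apply ex_RInt_Reals_1, pr_mom|].
  - apply (ex_RInt_Chasles f (- a) 0 b); apply ex_RInt_Reals_1; assumption.
  - rewrite (RInt_Reals _ _ _ pr_mom); exact Hbary.
Qed.
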